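(* For any finite alphabet $\mathfrak{G}$, the set of co-irreducible elements of the $\mathfrak{G}$-prefix poset is the set of all stringy $\mathfrak{G}$-trees. Moreover, the number of such elements of degree $d\geq 1$ is $\mathcal{R}_\mathfrak{G}(1)\,\mathcal{R}'_\mathfrak{G}(1)^{d-1}$, that is $(\#\mathfrak{G})\,\big(\sum_{\mathtt{a}\in\mathfrak{G}}|\mathtt{a}|\big)^{d-1}$.
   Context: $\mathfrak{G}$ is a finite alphabet (letters with arities $|\mathtt{a}|\geq 1$), and $\mathcal{R}_\mathfrak{G}(t) = \sum_{\mathtt{a}\in\mathfrak{G}} t^{|\mathtt{a}|}$ with derivative $\mathcal{R}'_\mathfrak{G}$. A $\mathfrak{G}$-tree is either the leaf (the tree with no internal node) or a root decorated by a letter $\mathtt{a}\in\mathfrak{G}$ with $|\mathtt{a}|$ children that are $\mathfrak{G}$-trees; its degree is its number of internal nodes. The $\mathfrak{G}$-prefix poset is the set of $\mathfrak{G}$-trees ordered by $\mathfrak{s}\preceq\mathfrak{t}$ iff $\mathfrak{t}$ is obtained by grafting some $\mathfrak{G}$-trees onto the leaves of $\mathfrak{s}$; its covering relation consists in replacing a leaf by an internal node all of whose children are leaves. A tree is co-irreducible if it covers at most one element. A $\mathfrak{G}$-tree is stringy if each of its internal nodes has at most one child that is an internal node. *)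

From HB Require Import structures.
From mathcomp Require Import all_boot.
Set Implicit Arguments. Unset Strict Implicit. Unset Printing Implicit Defensive.

(* An alphabet is a finite type [G] with an arity
   function [ar : G -> nat] (all arities >= 1, imposed in the theorem).
   Raw trees: a leaf, or a node labelled by a letter with a list of children;
   a G-tree is a raw tree which is well formed ([wf ar]): every node labelled
   by [a] has exactly [ar a] children. *)

Inductive tree (G : Type) : Type :=
| Leaf : tree G
| Node : G -> seq (tree G) -> tree G.
Arguments Leaf {G}.

Section TreeCount.
Variable G : countType.

Fixpoint enc (t : tree G) : GenTree.tree G :=
  match t with
  | Leaf => GenTree.Node 0 [::]
  | Node a ts => GenTree.Node 1 (GenTree.Leaf a :: map enc ts)
  end.

Fixpoint opt_seq (T : Type) (l : seq (option T)) : option (seq T) :=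
  match l with
  | [::] => Some [::]
  | Some x :: l' => omap (cons x) (opt_seq l')
  | None :: _ => None
  end.

Fixpoint dec (t : GenTree.tree G) : option (tree G) :=
  match t with
  | GenTree.Node 0 [::] => Some Leaf
  | GenTree.Node 1 (GenTree.Leaf a :: us) =>
      omap (Node a) (opt_seq (map dec us))
  | _ => None
  end.

Fixpoint encK_aux (t : tree G) : dec (enc t) = Some t :=
  match t return dec (enc t) = Some t with
  | Leaf => erefl
  | Node a ts =>
      f_equal (omap (Node a))
        ((fix g (l : seq (tree G)) :
            opt_seq (map dec (map enc l)) = Some l :=
            match l return opt_seq (map dec (map enc l)) = Some l with
            | [::] => erefl
            | t :: l' =>
                @eq_ind_r _ (Some t)
                  (fun o => match o with
                            | Some x => omap (cons x) (opt_seq (map dec (map enc l')))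
                            | None => None end = Some (t :: l'))
                  (@eq_ind_r _ (Some l') (fun o => omap (cons t) o = Some (t :: l')) erefl _ (g l'))
                  _ (encK_aux t)
            end) ts)
  end.

Lemma encK : pcancel enc dec. Proof. exact: encK_aux. Qed.

HB.instance Definition _ := Countable.copy (tree G) (pcan_type encK).
End TreeCount.

Section Trees.
Variables (G : finType) (ar : G -> nat).

Fixpoint wf (t : tree G) : bool :=
  match t with
  | Leaf => true
  | Node a ts => (size ts == ar a) && all wf ts
  end.

Fixpoint degree (t : tree G) : nat :=
  match t with
  | Leaf => 0
  | Node _ ts => (sumn (map degree ts)).+1
  end.

Definition is_internal (t : tree G) : bool :=
  if t is Node _ _ then true else false.

Fixpoint stringy (t : tree G) : bool :=
  match t with
  | Leaf => true
  | Node _ ts => (count is_internal ts <= 1) && all stringy ts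
  end.

Fixpoint prefix (s t : tree G) : bool :=
  match s, t with
  | Leaf, _ => true
  | Node a ss, Node b ts => (a == b) && all2 prefix ss ts
  | Node _ _, Leaf => false
  end.

(* covering relation of the G-prefix poset (elements = well-formed trees):
   [covers t s] iff s is covered by t *)
Definition covers (t s : tree G) : Prop :=
  [/\ wf s, wf t, prefix s t, s != t &
      forall u, wf u -> prefix s u -> prefix u t -> u = s \/ u = t].

Definition coirreducible (t : tree G) : Prop :=
  forall s1 s2, covers t s1 -> covers t s2 -> s1 = s2.
End Trees.

(* A cover of a tree t is obtained by deleting an internal node of t all of
   whose children are leaves.  The prefixes of a stringy tree form a chain, so
   a stringy tree covers at most one tree.  A tree that is not stringy has two
   internal siblings, or a non-stringy subtree; in both cases deleting such a
   node in two different places yields two distinct covers.  Finally, a stringy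
   tree of degree d + 1 is a root labelled a whose children are leaves except
   for one stringy tree of degree d, placed in one of the |a| slots of a; this
   gives #G * (sum_a |a|)^(d-1) stringy trees of degree d. *)

From Pilot Require Import Defs.
From HB Require Import structures.
From mathcomp Require Import all_boot.
Set Implicit Arguments. Unset Strict Implicit. Unset Printing Implicit Defensive.

(* [all_boot] exports [seq.prefix], which would hide the prefix order on trees. *)
Local Notation prefix := (@Defs.prefix _).

Lemma split_count_gt1 (T : eqType) (p : pred T) s : 1 < count p s ->
  exists s1 x s2 y s3, [/\ s = s1 ++ x :: s2 ++ y :: s3, p x & p y].
Proof.
elim: s => //= z s IH; case pz: (p z) => /= count_s.
  have /hasP[y /splitPr[s2 s3] py] : has p s by rewrite has_count.
  by exists [::], z, s2, y, s3.
have [s1 [x [s2 [y [s3 [-> px py]]]]]] := IH count_s.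
by exists (z :: s1), x, s2, y, s3.
Qed.

Section Trees.
Variable G : finType.
Implicit Types (s t u c x : tree G) (ss ts us : seq (tree G)).

Lemma tree_ind (P : tree G -> Prop) :
  P Leaf -> (forall a ts, {in ts, forall u, P u} -> P (Node a ts)) ->
  forall t, P t.
Proof.
move=> PLeaf PNode; fix IH 1; case=> [|a ts]; first exact: PLeaf.
apply: PNode; elim: ts => [|t ts IHts] u.
  (* not [done], which would close the goal with an unguarded call to [IH] *)
  by rewrite in_nil => nil_u; discriminate nil_u.
by rewrite inE => /predU1P[->|/IHts].
Qed.

Lemma prefix_refl t : prefix t t.
Proof.
elim/tree_ind: t => //= a ts IH; rewrite eqxx /=.
elim: ts IH => //= t ts IHts IH.
by rewrite IH ?mem_head ?IHts // => u ts_u; apply/IH/predU1r.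
Qed.

Lemma all2_prefix_refl ts : all2 prefix ts ts.
Proof. by elim: ts => //= t ts ->; rewrite prefix_refl. Qed.

Lemma prefix_leaf s : prefix s Leaf -> s = Leaf.
Proof. by case: s. Qed.

Lemma all2_prefix_leaves ss ts :
  ~~ has (@is_internal G) ts -> all2 prefix ss ts -> ss = ts.
Proof.
elim: ts ss => [|[|b us] ts IH] [|s ss] //= no_internal /andP[/prefix_leaf -> ss_ts].
by rewrite (IH ss).
Qed.

Lemma degree_prefix s t : prefix s t -> degree s <= degree t ?= iff (s == t).
Proof.
elim/tree_ind: t s => [|b ts IH] [|a ss] //=.
case/andP=> /eqP <- ss_ts; have node_inj : injective (Node a) by move=> ? ? [].
suff [le_ss_ts eq_ss_ts] :
    sumn (map (@degree G) ss) <= sumn (map (@degree G) ts) ?= iff (ss == ts).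
  by rewrite (inj_eq node_inj); split; rewrite /= ?eqSS.
elim: ts ss IH ss_ts => [|t ts IHts] [|s ss] //= IH /andP[s_t ss_ts].
rewrite eqseq_cons; apply: leqif_add; first exact/IH/s_t/mem_head.
by apply: IHts => // u ts_u; apply/IH/predU1r.
Qed.

Lemma leaves_nseq ts : ~~ has (@is_internal G) ts -> ts = nseq (size ts) Leaf.
Proof. by elim: ts => //= -[|a us] ts IH //= /IH <-. Qed.

Lemma degree_leaves a n : degree (Node a (nseq n (@Leaf G))) = 1.
Proof. by rewrite /= map_nseq sumn_nseq. Qed.

Lemma node_cat_inj a ts1 x ts2 y us2 :
  Node a (ts1 ++ x :: ts2) = Node a (ts1 ++ y :: us2) -> x = y.
Proof. by case=> /eqP; rewrite eqseq_cat // eqseq_cons => /andP[_ /andP[/eqP]]. Qed.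

Lemma prefix_stringy_total t s u :
  stringy t -> prefix s t -> prefix u t -> prefix s u || prefix u s.
Proof.
elim/tree_ind: t s u => [|a ts IH] [|a1 ss] [|a2 us] //=.
case/andP=> one_internal /allP ts_stringy /andP[/eqP-> ss_ts] /andP[/eqP-> us_ts].
rewrite eqxx /=.
have {ts_stringy}IH :
    {in ts, forall c s u, prefix s c -> prefix u c -> prefix s u || prefix u s}.
  by move=> c c_in s u; apply: IH c c_in s u (ts_stringy c c_in).
elim: ts ss us one_internal IH ss_ts us_ts => [|t ts IHts] [|s ss] [|u us] //=.
move=> one_internal IH /andP[s_t ss_ts] /andP[u_t us_ts].
case: (boolP (is_internal t)) => [t_internal | t_leaf].
  have no_internal : ~~ has (@is_internal G) ts.
    by move: one_internal; rewrite t_internal has_count -leqNgt.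
  rewrite (all2_prefix_leaves no_internal ss_ts) (all2_prefix_leaves no_internal us_ts).
  by rewrite all2_prefix_refl !andbT (IH t (mem_head t ts) s u s_t u_t).
move: t_leaf s_t u_t IH one_internal.
case: t => // _ /prefix_leaf-> /prefix_leaf-> IH /= one_internal.
by apply: IHts => // c c_in; apply/IH/predU1r.
Qed.

End Trees.

Section Covers.
Variables (G : finType) (ar : G -> nat).
Implicit Types (s t u c x : tree G) (ts : seq (tree G)).

Definition prefix1 s t := [/\ wf ar s, prefix s t & (degree s).+1 = degree t].

Lemma prefix1_neq s t : prefix1 s t -> s != t.
Proof. by case=> _ _; apply: contra_eqN => /eqP->; rewrite eqn_leq ltnn. Qed.

Lemma prefix1_covers s t : wf ar t -> prefix1 s t -> covers ar t s.
Proof.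
move=> t_wf s_t1; have [s_wf s_t deg_st] := s_t1; split; rewrite ?prefix1_neq //.
move=> u u_wf s_u u_t; case: (eqVneq u s) => [|u_neq]; [by left | right].
have lt_su : degree s < degree u by rewrite (ltn_leqif (degree_prefix s_u)) eq_sym.
have [le_ut eq_ut] := degree_prefix u_t.
by apply/eqP; rewrite -eq_ut eqn_leq le_ut -deg_st.
Qed.

Lemma prefix1_graft a ts1 c ts2 x :
  wf ar (Node a (ts1 ++ c :: ts2)) -> prefix1 x c ->
  prefix1 (Node a (ts1 ++ x :: ts2)) (Node a (ts1 ++ c :: ts2)).
Proof.
move=> /= /andP[size_ts]; rewrite !all_cat /= => /and3P[ts1_wf _ ts2_wf].
case=> x_wf x_c deg_xc; split.
- rewrite /= all_cat /= ts1_wf x_wf ts2_wf !size_cat /= !andbT.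
  by rewrite size_cat in size_ts.
- rewrite /= eqxx /=; elim: ts1 {ts1_wf size_ts} => /= [|t ts1 ->].
    by rewrite x_c all2_prefix_refl.
  by rewrite prefix_refl.
- by rewrite /= !map_cat !sumn_cat /= -deg_xc addnS.
Qed.

Lemma exists_prefix1 t : wf ar t -> is_internal t -> exists s, prefix1 s t.
Proof.
elim/tree_ind: t => //= a ts IH t_wf _.
case: (boolP (has (@is_internal G) ts)) => [/hasP[c c_in c_internal] | no_internal].
  move: c_in t_wf IH => /splitPr[ts1 ts2] t_wf IH.
  have c_wf : wf ar c by move: t_wf => /andP[_]; rewrite all_cat /= => /and3P[].
  have [x x_c] : exists x, prefix1 x c by apply: IH; rewrite // mem_cat mem_head orbT.
  by exists (Node a (ts1 ++ x :: ts2)); apply: prefix1_graft.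
exists Leaf; split=> //.
by rewrite (leaves_nseq no_internal) degree_leaves.
Qed.

Lemma nonstringy_prefix1 t : wf ar t -> ~~ stringy t ->
  exists s1 s2, [/\ prefix1 s1 t, prefix1 s2 t & s1 != s2].
Proof.
elim/tree_ind: t => //= a ts IH t_wf.
have ts_wf : {in ts, forall u, wf ar u} by case/andP: t_wf => _ /allP.
rewrite negb_and -ltnNge => /orP[many_internal | /allPn[c c_in c_nonstringy]].
  have [ts1 [c [ts2 [c' [ts3 [ts_eq c_internal c'_internal]]]]]] :=
    split_count_gt1 many_internal.
  have [x x_c] : exists x, prefix1 x c.
    apply: exists_prefix1 c_internal; apply: ts_wf.
    by rewrite ts_eq mem_cat mem_head orbT.
  have [x' x'_c'] : exists x', prefix1 x' c'.
    apply: exists_prefix1 c'_internal; apply: ts_wf.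
    by rewrite ts_eq mem_cat inE mem_cat mem_head !orbT.
  rewrite ts_eq in t_wf *.
  exists (Node a (ts1 ++ x :: ts2 ++ c' :: ts3)),
         (Node a (ts1 ++ c :: ts2 ++ x' :: ts3)).
  split; first exact: prefix1_graft.
    by move: (@prefix1_graft a (ts1 ++ c :: ts2) c' ts3 x'); rewrite -!catA; apply.
  by apply/eqP => /node_cat_inj x_eq; move: (prefix1_neq x_c); rewrite x_eq eqxx.
move: c_in t_wf IH ts_wf => /splitPr[ts1 ts2] t_wf IH ts_wf.
have c_in : c \in ts1 ++ c :: ts2 by rewrite mem_cat mem_head orbT.
have [s1 [s2 [s1_c s2_c s12]]] := IH c c_in (ts_wf c c_in) c_nonstringy.
exists (Node a (ts1 ++ s1 :: ts2)), (Node a (ts1 ++ s2 :: ts2)).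
split; try exact: prefix1_graft.
by apply: contra_neq s12 => /node_cat_inj.
Qed.

Lemma covers_prefix_eq t s1 s2 :
  covers ar t s1 -> covers ar t s2 -> prefix s1 s2 -> s1 = s2.
Proof.
case=> _ _ _ _ s1_max [s2_wf _ s2_t s2_neq _] s12.
by case: (s1_max s2 s2_wf s12 s2_t) => // s2_eq; rewrite s2_eq eqxx in s2_neq.
Qed.

Lemma stringy_coirreducible t : stringy t -> coirreducible ar t.
Proof.
move=> t_stringy s1 s2 cov1 cov2.
have [[_ _ s1_t _ _] [_ _ s2_t _ _]] := (cov1, cov2).
case/orP: (prefix_stringy_total t_stringy s1_t s2_t) => [s12|s21].
  exact: covers_prefix_eq cov1 cov2 s12.
exact/esym/(covers_prefix_eq cov2 cov1 s21).
Qed.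

Lemma coirreducibleP t : wf ar t -> coirreducible ar t <-> stringy t.
Proof.
move=> t_wf; split; last exact: stringy_coirreducible.
move=> t_coirr; apply/negPn/negP => /(nonstringy_prefix1 t_wf)[s1 [s2 [s1_t s2_t]]].
by rewrite (t_coirr s1 s2 (prefix1_covers t_wf s1_t) (prefix1_covers t_wf s2_t)) eqxx.
Qed.
End Covers.

Section Enumeration.
Variables (G : finType) (ar : G -> nat).
Implicit Types (a b : G) (t c d : tree G) (ts : seq (tree G)).

Definition corolla a : tree G := Node a (nseq (ar a) Leaf).

Definition graft a i c : tree G :=
  Node a (nseq i Leaf ++ c :: nseq (ar a - i.+1) Leaf).

Definition slots : seq (G * nat) := [seq (a, i) | a <- enum G, i <- iota 0 (ar a)].

Fixpoint stringy_trees n : seq (tree G) :=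
  if n is n'.+1 then [seq graft p.1 p.2 c | p <- slots, c <- stringy_trees n']
  else map corolla (enum G).

Lemma mem_slots a i : ((a, i) \in slots) = (i < ar a).
Proof.
apply/allpairsPdep/idP => [[b [j [_ j_lt [-> ->]]]] | i_lt].
  by rewrite mem_iota in j_lt.
by exists a, i; rewrite mem_enum mem_iota.
Qed.

Lemma uniq_slots : uniq slots.
Proof.
apply: allpairs_uniq_dep => [|a _|[a i] [b j] _ _ [-> ->]] //.
  exact: enum_uniq.
exact: iota_uniq.
Qed.

Lemma size_slots : size slots = \sum_a ar a.
Proof.
rewrite size_allpairs_dep sumnE big_map big_enum /=.
by apply: eq_bigr => a _; rewrite size_iota.
Qed.

Lemma wf_corolla a : wf ar (corolla a).
Proof. by rewrite /= size_nseq eqxx all_nseq orbT. Qed.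

Lemma stringy_corolla a : stringy (corolla a).
Proof. by rewrite /= count_nseq all_nseq orbT. Qed.

Lemma degree_corolla a : degree (corolla a) = 1.
Proof. exact: degree_leaves. Qed.

Lemma wf_graft a i c : i < ar a -> wf ar (graft a i c) = wf ar c.
Proof.
move=> i_lt; rewrite /= size_cat /= !size_nseq subnSK // (subnKC (ltnW i_lt)) eqxx.
by rewrite all_cat /= !all_nseq !orbT andbT.
Qed.

Lemma stringy_graft a i c : stringy (graft a i c) = stringy c.
Proof.
rewrite /= count_cat /= !count_nseq /= addn0 leq_b1.
by rewrite all_cat /= !all_nseq !orbT andbT.
Qed.

Lemma degree_graft a i c : degree (graft a i c) = (degree c).+1.
Proof. by rewrite /= map_cat sumn_cat /= !map_nseq !sumn_nseq addn0. Qed.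

Lemma graft_inj a b i j c d : is_internal c -> is_internal d ->
  graft a i c = graft b j d -> [/\ a = b, i = j & c = d].
Proof.
move=> c_internal d_internal [<- children_eq].
have find_graft k e l :
    is_internal e -> find (@is_internal G) (nseq k Leaf ++ e :: l) = k.
  by move=> e_internal; rewrite find_cat has_nseq andbF size_nseq /= e_internal addn0.
have i_eq : i = j.
  by rewrite -(find_graft i c (nseq (ar a - i.+1) Leaf)) // children_eq find_graft.
by move: children_eq; rewrite i_eq => /(congr1 (Node a))/node_cat_inj.
Qed.

Lemma stringy_children ts : count (@is_internal G) ts <= 1 ->
  ts = nseq (size ts) Leaf \/
  exists i c j, ts = nseq i Leaf ++ c :: nseq j Leaf /\ is_internal c.
Proof.
elim: ts => [|[|b us] ts IH] /=; first by left.
  move=> /IH[->|[i [c [j [-> c_internal]]]]]; first by left; rewrite size_nseq.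
  by right; exists i.+1, c, j.
move=> no_internal; right; exists 0, (Node b us), (size ts); split=> //=.
by rewrite -leaves_nseq // has_count -leqNgt.
Qed.

Lemma stringy_node_cases a ts : wf ar (Node a ts) -> stringy (Node a ts) ->
  Node a ts = corolla a \/
  exists i c, [/\ Node a ts = graft a i c, i < ar a & is_internal c].
Proof.
case/andP=> /eqP size_ts _ /andP[/stringy_children children _].
case: children => [ts_eq|[i [c [j [ts_eq c_internal]]]]].
  by left; rewrite /corolla -size_ts -ts_eq.
right; exists i, c.
by rewrite /graft -size_ts ts_eq size_cat /= !size_nseq addnS subSS addKn ltnS leq_addr.
Qed.

Lemma mem_stringy_trees n t :
  (t \in stringy_trees n) = [&& wf ar t, stringy t & degree t == n.+1].
Proof.
elim: n t => [|n IH] t /=.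
  apply/mapP/idP => [[a _ ->]|].
    by rewrite wf_corolla stringy_corolla degree_corolla.
  case: t => // a ts /and3P[t_wf t_stringy deg_t].
  case: (stringy_node_cases t_wf t_stringy) => [->|[i [c [t_eq _ c_internal]]]].
    by exists a; rewrite ?mem_enum.
  by move: deg_t; rewrite t_eq degree_graft; case: c c_internal {t_eq}.
apply/allpairsP/idP => [[[[a i] c] /= [slot_ai c_in ->]] | ].
  rewrite mem_slots in slot_ai; rewrite IH in c_in.
  case/and3P: c_in => c_wf c_stringy deg_c.
  by rewrite wf_graft // stringy_graft degree_graft c_wf c_stringy.
case: t => [|a ts] /and3P[t_wf t_stringy deg_t] //.
case: (stringy_node_cases t_wf t_stringy) => [t_eq|[i [c [t_eq i_lt _]]]].
  by rewrite t_eq degree_corolla in deg_t.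
rewrite t_eq in t_wf t_stringy deg_t *; exists ((a, i), c); split=> //=.
  by rewrite mem_slots.
rewrite IH -(wf_graft c i_lt) t_wf -(stringy_graft a i) t_stringy.
by rewrite -eqSS -(degree_graft a i).
Qed.

Lemma uniq_stringy_trees n : uniq (stringy_trees n).
Proof.
elim: n => [|n IH] /=.
  by rewrite map_inj_uniq ?enum_uniq // => a b [].
have internal_of t : t \in stringy_trees n -> is_internal t.
  by rewrite mem_stringy_trees; case: t.
apply: allpairs_uniq => //; first exact: uniq_slots.
move=> [[a i] c] [[b j] d] /allpairsP[[p c'] [_ c_in [_ ->]]].
move=> /allpairsP[[q d'] [_ d_in [_ ->]]] /= /graft_inj[] //; try exact: internal_of.
by move=> -> -> ->.
Qed.

Lemma size_stringy_trees n : size (stringy_trees n) = #|G| * (\sum_a ar a) ^ n.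
Proof.
elim: n => [|n IH] /=; first by rewrite size_map -cardE muln1.
by rewrite size_allpairs IH size_slots expnS mulnCA.
Qed.
End Enumeration.

Theorem proposition3p6 (G : finType) (ar : G -> nat)
    (ar_pos : forall a : G, 0 < ar a) :
  (forall t : tree G, wf ar t -> (coirreducible ar t <-> stringy t)) /\
  (forall d : nat, 0 < d ->
     exists s : seq (tree G),
       [/\ uniq s,
           forall t, t \in s <-> [/\ wf ar t, coirreducible ar t & degree t = d]
         & size s = #|G| * (\sum_(a : G) ar a) ^ (d - 1)]).
Proof.
split; first exact: coirreducibleP.
case=> // n _; exists (stringy_trees ar n); split.
- exact: uniq_stringy_trees.
- move=> t; rewrite mem_stringy_trees; split.
    by case/and3P=> t_wf t_stringy /eqP deg_t; split=> //; apply/coirreducibleP.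
  by case=> t_wf /(coirreducibleP t_wf) -> ->; rewrite t_wf eqxx.
- by rewrite size_stringy_trees subn1.
Qed.
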